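(* Let $\theta$ be an irrational number whose best rational approximants $(p_n/q_n)_{n\ge0}$ satisfy $q_n^{-1}\log q_{n+1}\to\infty$ as $n\to\infty$. For any sequence of positive numbers $(\varepsilon_p)_{p\ge1}$ converging to $0$, there exist a subsequence $(q'_n)_{n\ge0}$ of $(q_n)_{n\ge0}$ and a strictly increasing sequence of positive integers $(N_p)_{p\ge1}$ such that for every $p\ge1$, \[|1-e^{2\pi i N_p\theta}|+\sum_{n\ge0}|1-e^{2\pi i q'_nN_p\theta}|\,p^{q'_n}\le\varepsilon_p.\]
   Context: Best rational approximants $p_n/q_n$ of an irrational $\theta$ are its continued fraction convergents, with $\gcd(p_n,q_n)=1$, $q_n\ge0$. A subsequence $q'$ of $(q_n)$ means $q'_n=q_{k_n}$ with $k_n$ strictly increasing. *)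

From Stdlib Require Import Reals ZArith Arith.
Open Scope R_scope.

Definition irrational (t : R) : Prop :=
  ~ exists (a b : Z), b <> 0%Z /\ t = IZR a / IZR b.

Fixpoint cf_rem (t : R) (n : nat) : R :=
  match n with
  | O => t - IZR (Int_part t)
  | S m => / cf_rem t m - IZR (Int_part (/ cf_rem t m))
  end.

(* partial quotient a_{n+1} = floor(1/x_n) *)
Definition cf_a (t : R) (n : nat) : nat :=
  Z.to_nat (Int_part (/ cf_rem t n)).

(* (q_{n-1}, q_n), with q_{-1} = 0, q_0 = 1, q_{n+1} = a_{n+1} q_n + q_{n-1} *)
Fixpoint cf_qpair (t : R) (n : nat) : nat * nat :=
  match n with
  | O => (0%nat, 1%nat)
  | S m => let (qa, qb) := cf_qpair t m in (qb, (cf_a t m * qb + qa)%nat)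
  end.

Definition cf_q (t : R) (n : nat) : nat := snd (cf_qpair t n).

(* |1 - e^{2 pi i x}| written out *)
Definition abs1e (x : R) : R :=
  sqrt ((1 - cos (2 * PI * x)) ^ 2 + (sin (2 * PI * x)) ^ 2).

From Stdlib Require Import Reals ZArith Arith Lra Lia ClassicalEpsilon.
Open Scope R_scope.

(* The subsequence is the whole sequence of denominators, and [N_p = q_(m_p)] for a
   fast increasing [m_p].  Since [||q_n theta|| <= 1/q_(n+1)], the [n]-th term of the
   series is at most [2 pi q_n p^(q_n) / q_(m_p+1)] when [n <= m_p] and
   [2 pi q_(m_p) p^(q_n) / q_(n+1)] when [n > m_p].  The growth hypothesis makes
   [q_(k+1) >= C (4p)^(q_k)] for every constant [C] and all large [k]; taking [m_p]
   beyond that threshold, with [C] of order [1/eps_p], bounds the [n]-th term by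
   [eps_p / 2^(n+2)] and the leading term [|1 - e^(2 pi i N_p theta)|] by [eps_p / 2]. *)


Lemma Rabs_sin_le x : Rabs (sin x) <= Rabs x.
Proof.
  assert (Hnonneg : forall y, 0 <= y -> - y <= sin y <= y).
  { intros y Hy. split.
    - destruct (Rle_lt_dec y 1).
      + pose proof PI2_3_2. assert (0 <= sin y) by (apply sin_ge_0; lra). lra.
      + pose proof (SIN_bound y). lra.
    - destruct (Req_dec y 0) as [->|]; [rewrite sin_0; lra|].
      left; apply sin_lt_x; lra. }
  destruct (Rle_lt_dec 0 x) as [Hx|Hx].
  - specialize (Hnonneg x Hx). unfold Rabs; repeat destruct Rcase_abs; lra.
  - specialize (Hnonneg (- x) ltac:(lra)). rewrite sin_neg in Hnonneg.
    unfold Rabs; repeat destruct Rcase_abs; lra.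
Qed.

Lemma abs1e_ge0 x : 0 <= abs1e x.
Proof. apply sqrt_pos. Qed.

Lemma abs1e_sin x : abs1e x = 2 * Rabs (sin (PI * x)).
Proof.
  unfold abs1e. replace (2 * PI * x) with (2 * (PI * x)) by ring.
  rewrite cos_2a_sin, sin_2a.
  replace ((1 - (1 - 2 * sin (PI * x) * sin (PI * x))) ^ 2
           + (2 * sin (PI * x) * cos (PI * x)) ^ 2)
    with (Rsqr (2 * sin (PI * x)))
    by (pose proof (sin2_cos2 (PI * x)); unfold Rsqr in *; nra).
  rewrite sqrt_Rsqr_abs, Rabs_mult, Rabs_right by lra. reflexivity.
Qed.

Lemma abs1e_le_dist x (z : Z) : abs1e x <= 2 * PI * Rabs (x - IZR z).
Proof.
  rewrite abs1e_sin.
  replace (PI * x) with (PI * (x - IZR z) + IZR z * PI) by ring.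
  assert (Hsin : sin (IZR z * PI) = 0) by (apply sin_eq_0_1; exists z; reflexivity).
  assert (Hcos : Rabs (cos (IZR z * PI)) = 1).
  { pose proof (sin2_cos2 (IZR z * PI)) as H. rewrite Hsin in H.
    rewrite <- sqrt_Rsqr_abs, <- sqrt_1. f_equal. unfold Rsqr in *. lra. }
  rewrite sin_plus, Hsin, Rmult_0_r, Rplus_0_r, Rabs_mult, Hcos, Rmult_1_r.
  pose proof (Rabs_sin_le (PI * (x - IZR z))) as H.
  rewrite Rabs_mult, (Rabs_right PI) in H by (pose proof PI_RGT_0; lra). lra.
Qed.

Lemma INR_le_pow2 n : INR n <= 2 ^ n.
Proof. induction n; [simpl; lra|]. rewrite S_INR. simpl. pose proof (pow_R1_Rle 2 n). lra. Qed.

(* The weight [4^Q = 2^Q 2^Q] absorbs both [a <= Q <= 2^Q] and [2^j <= 2 2^Q]. *)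
Lemma ratio_le_geometric (Q j : nat) a P p c r : 0 < c -> 1 <= p ->
  0 <= a <= INR Q -> 0 <= P <= p ^ Q -> (j <= S Q)%nat ->
  4 * PI / c * (4 * p) ^ Q <= r -> 2 * PI * (a / r) * P <= c * (/ 2) ^ j.
Proof.
  intros Hc Hp Ha HP Hj Hr.
  pose proof PI_RGT_0. pose proof (INR_le_pow2 Q).
  assert (H2j : 2 ^ j <= 2 * 2 ^ Q)
    by (change (2 * 2 ^ Q) with (2 ^ S Q); apply Rle_pow; [lra|lia]).
  assert (0 < 2 ^ j) by (apply pow_lt; lra).
  assert (0 < 2 ^ Q) by (apply pow_lt; lra).
  assert (HX : (4 * p) ^ Q = 2 ^ Q * 2 ^ Q * p ^ Q)
    by (rewrite <- !Rpow_mult_distr; f_equal; ring).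
  set (X := (4 * p) ^ Q) in *.
  assert (1 <= X) by (apply pow_R1_Rle; lra).
  assert (Hprod : a * P * 2 ^ j <= 2 * X).
  { rewrite HX. apply Rle_trans with (2 ^ Q * p ^ Q * (2 * 2 ^ Q)); [|lra].
    apply Rmult_le_compat; [nra|lra| |lra]. apply Rmult_le_compat; lra. }
  assert (Hcr : 4 * PI * X <= c * r).
  { apply (Rmult_le_compat_l c) in Hr; [|lra].
    replace (c * (4 * PI / c * X)) with (4 * PI * X) in Hr by (field; lra). lra. }
  assert (0 < r) by nra.
  rewrite pow_inv. apply (Rmult_le_reg_r (2 ^ j * r)); [nra|].
  replace (c * / 2 ^ j * (2 ^ j * r)) with (c * r) by (field; lra).
  replace (2 * PI * (a / r) * P * (2 ^ j * r)) with (2 * PI * (a * P * 2 ^ j)) by (field; lra).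
  nra.
Qed.

Lemma sum_geometric_half c n : sum_f_R0 (fun k => c * (/ 2) ^ S k) n = c * (1 - (/ 2) ^ S n).
Proof. induction n as [|n IH]; [simpl; field|]. rewrite tech5, IH. simpl. field. Qed.

Lemma infinite_sum_le_geometric (f : nat -> R) c :
  (forall k, 0 <= f k <= c * (/ 2) ^ S k) -> exists l, infinite_sum f l /\ l <= c.
Proof.
  intro Hf.
  assert (Hc : 0 <= c) by (destruct (Hf 0%nat); simpl in *; lra).
  assert (Hub : forall n, sum_f_R0 f n <= c).
  { intro n. apply Rle_trans with (sum_f_R0 (fun k => c * (/ 2) ^ S k) n).
    - apply sum_Rle. intros; apply Hf.
    - rewrite sum_geometric_half. assert (0 < (/ 2) ^ S n) by (apply pow_lt; lra). nra. }
  destruct (growing_cv (sum_f_R0 f)) as [l Hl].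
  - intro n. simpl. destruct (Hf (S n)). lra.
  - exists c. intros x [i ->]. apply Hub.
  - exists l. split; [exact Hl|].
    apply (Rle_cv_lim Hub Hl).
    intros e He. exists 0%nat. intros. unfold R_dist. rewrite Rminus_diag, Rabs_R0. lra.
Qed.

Lemma increasing_thresholds (P : nat -> nat -> Prop) :
  (forall p, exists M, forall k, (M <= k)%nat -> P p k) ->
  exists m : nat -> nat, (forall p, (m p < m (S p))%nat) /\
                         (forall p k, (m p <= k)%nat -> P p k).
Proof.
  intro HP. destruct (choice _ HP) as [M HM].
  set (m := fix m p := match p with O => M O | S p' => Nat.max (M p) (S (m p')) end).
  exists m. split.
  - intro p. simpl. lia.
  - intros p k Hk. apply HM. destruct p; simpl in Hk; lia.
Qed.

Section Convergents.
Variable t : R.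

Lemma cf_rem_bounds n : 0 <= cf_rem t n < 1.
Proof.
  destruct n; simpl;
    [pose proof (base_Int_part t) | pose proof (base_Int_part (/ cf_rem t n))]; lra.
Qed.

Lemma cf_a_spec n : 0 < cf_rem t n ->
  INR (cf_a t n) + cf_rem t (S n) = / cf_rem t n /\ (1 <= cf_a t n)%nat.
Proof.
  intro Hpos. pose proof (cf_rem_bounds n).
  assert (Hinv : 1 < / cf_rem t n) by (rewrite <- Rinv_1; apply Rinv_lt_contravar; lra).
  pose proof (base_Int_part (/ cf_rem t n)).
  assert (Hz : (1 <= Int_part (/ cf_rem t n))%Z).
  { assert (Hlt : 0 < IZR (Int_part (/ cf_rem t n))) by lra. apply lt_IZR in Hlt. lia. }
  unfold cf_a. split.
  - rewrite INR_IZR_INZ, Z2Nat.id by lia. simpl. ring.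
  - lia.
Qed.

Lemma cf_qpair_S n :
  cf_qpair t (S n) = (cf_q t n, (cf_a t n * cf_q t n + fst (cf_qpair t n))%nat).
Proof. unfold cf_q. simpl. destruct (cf_qpair t n); reflexivity. Qed.

Fixpoint cf_rem_prod (n : nat) : R :=
  match n with O => 1 | S m => cf_rem_prod m * cf_rem t m end.

(* [cf_err (S n) = q_n t - p_n = (-1)^n x_0 ... x_n], and [cf_err n] plays the same
   role for [q_(n-1)]. *)
Definition cf_err (n : nat) : R := - (-1) ^ n * cf_rem_prod n.

Lemma cf_q_ge1 n : (forall j, (j < n)%nat -> 0 < cf_rem t j) -> (1 <= cf_q t n)%nat.
Proof.
  induction n as [|m IH]; intro Hrem; [unfold cf_q; simpl; lia|].
  unfold cf_q at 1. rewrite cf_qpair_S. simpl.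
  destruct (cf_a_spec m (Hrem m ltac:(lia))) as [_ Ha].
  specialize (IH (fun j Hj => Hrem j ltac:(lia))). nia.
Qed.

Lemma cf_err_rec n : 0 < cf_rem t n ->
  cf_err (S (S n)) = INR (cf_a t n) * cf_err (S n) + cf_err n.
Proof.
  intro Hpos. destruct (cf_a_spec n Hpos) as [Ha _].
  assert (Hnext : cf_rem t (S n) = / cf_rem t n - INR (cf_a t n)) by lra.
  unfold cf_err.
  change (cf_rem_prod (S (S n))) with (cf_rem_prod n * cf_rem t n * cf_rem t (S n)).
  change (cf_rem_prod (S n)) with (cf_rem_prod n * cf_rem t n).
  rewrite Hnext. simpl pow. field. lra.
Qed.

Lemma cf_err_integral n : (forall j, (j < n)%nat -> 0 < cf_rem t j) ->
  (exists z, INR (fst (cf_qpair t n)) * t - cf_err n = IZR z) /\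
  (exists z, INR (cf_q t n) * t - cf_err (S n) = IZR z).
Proof.
  induction n as [|m IH]; intro Hrem.
  - split; [exists 1%Z | exists (Int_part t)]; unfold cf_err, cf_q; simpl; ring.
  - destruct (IH (fun j Hj => Hrem j ltac:(lia))) as [[z1 H1] [z2 H2]].
    split; [exists z2; rewrite cf_qpair_S; exact H2|].
    exists (Z.of_nat (cf_a t m) * z2 + z1)%Z.
    unfold cf_q at 1. rewrite cf_qpair_S. simpl snd.
    rewrite plus_IZR, mult_IZR, <- INR_IZR_INZ, <- H1, <- H2, plus_INR, mult_INR,
      cf_err_rec by (apply Hrem; lia).
    ring.
Qed.

End Convergents.

Section Irrational.
Variable t : R.
Hypothesis Hirr : irrational t.

Lemma cf_rem_pos n : 0 < cf_rem t n.
Proof.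
  induction n as [n IH] using (well_founded_induction lt_wf).
  destruct (cf_rem_bounds t n) as [[|Hzero] _]; auto. exfalso. apply Hirr.
  destruct n as [|m].
  - exists (Int_part t), 1%Z. split; [lia|]. simpl in Hzero. field_simplify. lra.
  - destruct (cf_err_integral t (S m) IH) as [_ [z Hz]].
    assert (Herr : cf_err t (S (S m)) = 0).
    { unfold cf_err. change (cf_rem_prod t (S (S m))) with (cf_rem_prod t (S m) * cf_rem t (S m)).
      rewrite <- Hzero. ring. }
    pose proof (cf_q_ge1 t (S m) IH) as Hq.
    exists z, (Z.of_nat (cf_q t (S m))). split; [lia|].
    apply le_INR in Hq. simpl in Hq.
    rewrite <- INR_IZR_INZ, <- Hz, Herr. field. lra.
Qed.

Lemma cf_q_pos n : (1 <= cf_q t n)%nat.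
Proof. apply cf_q_ge1. intros; apply cf_rem_pos. Qed.

Lemma INR_cf_q_pos n : 0 < INR (cf_q t n).
Proof. apply lt_0_INR, cf_q_pos. Qed.

Lemma cf_rem_prod_pos n : 0 < cf_rem_prod t n.
Proof. induction n; simpl; [lra|]. pose proof (cf_rem_pos n). nra. Qed.

Lemma cf_det n :
  INR (cf_q t n) * cf_rem_prod t n + INR (fst (cf_qpair t n)) * cf_rem_prod t (S n) = 1.
Proof.
  induction n as [|m IH]; [unfold cf_q; simpl; ring|].
  unfold cf_q at 1. rewrite cf_qpair_S. simpl fst. simpl snd.
  pose proof (cf_rem_pos m). destruct (cf_a_spec t m (cf_rem_pos m)) as [Ha _].
  assert (Hnext : cf_rem t (S m) = / cf_rem t m - INR (cf_a t m)) by lra.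
  rewrite <- IH, plus_INR, mult_INR.
  change (cf_rem_prod t (S (S m))) with (cf_rem_prod t m * cf_rem t m * cf_rem t (S m)).
  change (cf_rem_prod t (S m)) with (cf_rem_prod t m * cf_rem t m).
  rewrite Hnext. field. lra.
Qed.

Lemma cf_q_approx n : exists z : Z, Rabs (INR (cf_q t n) * t - IZR z) <= / INR (cf_q t (S n)).
Proof.
  destruct (cf_err_integral t n (fun j _ => cf_rem_pos j)) as [_ [z Hz]].
  exists z. rewrite <- Hz.
  replace (INR (cf_q t n) * t - (INR (cf_q t n) * t - cf_err t (S n))) with (cf_err t (S n))
    by ring.
  unfold cf_err. rewrite Rabs_mult, Rabs_Ropp, pow_1_abs, Rmult_1_l.
  pose proof (cf_rem_prod_pos (S n)). pose proof (cf_rem_prod_pos (S (S n))).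
  rewrite Rabs_right by lra.
  pose proof (cf_det (S n)) as Hdet. rewrite cf_qpair_S in Hdet. simpl fst in Hdet.
  pose proof (INR_cf_q_pos (S n)). pose proof (pos_INR (cf_q t n)).
  apply (Rmult_le_reg_l (INR (cf_q t (S n)))); [lra|]. rewrite Rinv_r by lra. nra.
Qed.

Lemma cf_q_le_S n : (cf_q t n <= cf_q t (S n))%nat.
Proof.
  unfold cf_q at 2. rewrite cf_qpair_S. simpl.
  destruct (cf_a_spec t n (cf_rem_pos n)) as [_ Ha]. nia.
Qed.

Lemma cf_q_lt_S n : (1 <= n)%nat -> (cf_q t n < cf_q t (S n))%nat.
Proof.
  intro Hn. unfold cf_q at 2. rewrite cf_qpair_S. simpl.
  destruct (cf_a_spec t n (cf_rem_pos n)) as [_ Ha].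
  destruct n as [|m]; [lia|]. rewrite cf_qpair_S. simpl.
  pose proof (cf_q_pos m). nia.
Qed.

Lemma cf_q_le m n : (m <= n)%nat -> (cf_q t m <= cf_q t n)%nat.
Proof. induction 1 as [|n _ IH]; [lia|]. pose proof (cf_q_le_S n). lia. Qed.

Lemma cf_q_ge_index n : (n <= cf_q t n)%nat.
Proof.
  induction n as [|[|m] IH]; [lia|apply cf_q_pos|].
  pose proof (cf_q_lt_S (S m) ltac:(lia)). lia.
Qed.

Lemma abs1e_mul_cf_q_le a n :
  abs1e (INR a * INR (cf_q t n) * t) <= 2 * PI * (INR a / INR (cf_q t (S n))).
Proof.
  destruct (cf_q_approx n) as [z Hz].
  eapply Rle_trans; [apply (abs1e_le_dist _ (Z.of_nat a * z))|].
  rewrite mult_IZR, <- INR_IZR_INZ.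
  replace (INR a * INR (cf_q t n) * t - INR a * IZR z)
    with (INR a * (INR (cf_q t n) * t - IZR z)) by ring.
  rewrite Rabs_mult, (Rabs_right (INR a)) by (apply Rle_ge, pos_INR).
  pose proof PI_RGT_0. pose proof (pos_INR a).
  unfold Rdiv. apply Rmult_le_compat_l; [lra|]. apply Rmult_le_compat_l; lra.
Qed.

(* The constants are those for which [ratio_le_geometric] bounds the [n]-th term of
   the series by [c / 2^(n+1)]. *)
Definition cf_gap_large (c p : R) (k : nat) : Prop :=
  4 * PI / c * (4 * p) ^ cf_q t k <= INR (cf_q t (S k)).

Section Terms.
Variables (c p : R) (M : nat).
Hypotheses (Hc : 0 < c) (Hp : 1 <= p).
Hypothesis Hgap : forall k, (M <= k)%nat -> cf_gap_large c p k.

Lemma abs1e_cf_q_le : abs1e (INR (cf_q t M) * t) <= c.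
Proof.
  apply Rle_trans with (2 * PI * (INR 1 / INR (cf_q t (S M))) * 1).
  { rewrite Rmult_1_r. replace (INR (cf_q t M) * t) with (INR 1 * INR (cf_q t M) * t)
      by (simpl; ring).
    apply abs1e_mul_cf_q_le. }
  replace c with (c * (/ 2) ^ 0) by (simpl; ring).
  apply (ratio_le_geometric (cf_q t M)) with (p := p); auto.
  - pose proof (le_INR _ _ (cf_q_pos M)). simpl in *. lra.
  - split; [lra|]. apply pow_R1_Rle; lra.
  - lia.
  - exact (Hgap M (le_n M)).
Qed.

Lemma cf_series_term_le n :
  abs1e (INR (cf_q t n) * INR (cf_q t M) * t) * p ^ cf_q t n <= c * (/ 2) ^ S n.
Proof.
  assert (HP : 0 <= p ^ cf_q t n) by (apply pow_le; lra).
  destruct (le_lt_dec n M) as [HnM | HMn].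
  - eapply Rle_trans; [apply Rmult_le_compat_r, abs1e_mul_cf_q_le; exact HP|].
    apply (ratio_le_geometric (cf_q t M)) with (p := p); auto.
    + split; [apply pos_INR|]. apply le_INR, cf_q_le, HnM.
    + split; [exact HP|]. apply Rle_pow; [lra|]. apply cf_q_le, HnM.
    + pose proof (cf_q_ge_index M). lia.
    + exact (Hgap M (le_n M)).
  - rewrite (Rmult_comm (INR (cf_q t n))).
    eapply Rle_trans; [apply Rmult_le_compat_r, abs1e_mul_cf_q_le; exact HP|].
    apply (ratio_le_geometric (cf_q t n)) with (p := p); auto.
    + split; [apply pos_INR|]. apply le_INR, cf_q_le. lia.
    + split; lra.
    + pose proof (cf_q_ge_index n). lia.
    + apply Hgap. lia.
Qed.

End Terms.

Hypothesis Hgrowth : cv_infty (fun n => ln (INR (cf_q t (S n))) / INR (cf_q t n)).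

Lemma cf_q_eventually_ge C b : 0 < C -> 1 <= b ->
  exists M, forall k, (M <= k)%nat -> C * b ^ cf_q t k <= INR (cf_q t (S k)).
Proof.
  intros HC Hb. destruct (Hgrowth (ln b + Rabs (ln C))) as [M HM].
  exists M. intros k Hk. specialize (HM k Hk).
  pose proof (INR_cf_q_pos k). pose proof (INR_cf_q_pos (S k)).
  pose proof (le_INR _ _ (cf_q_pos k)) as Hq1. simpl in Hq1.
  assert (Hlnb : 0 <= ln b).
  { destruct Hb as [Hb | <-]; [left; rewrite <- ln_1; apply ln_increasing; lra|].
    rewrite ln_1; lra. }
  left. apply ln_lt_inv; [apply Rmult_lt_0_compat; [lra|apply pow_lt; lra]|lra|].
  rewrite ln_mult, ln_pow by (try apply pow_lt; lra).
  apply (Rmult_lt_compat_r (INR (cf_q t k))) in HM; [|lra].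
  unfold Rdiv in HM. rewrite Rmult_assoc, Rinv_l, Rmult_1_r in HM by lra.
  pose proof (Rle_abs (ln C)). pose proof (Rabs_pos (ln C)). nra.
Qed.

End Irrational.

Theorem lemma2p5 (theta : R) (Hirr : irrational theta)
  (Hgrowth : cv_infty (fun n => ln (INR (cf_q theta (S n))) / INR (cf_q theta n)))
  (eps : nat -> R)
  (Hpos : forall p : nat, (1 <= p)%nat -> 0 < eps p)
  (Hcv : Un_cv eps 0) :
  exists (k : nat -> nat) (N : nat -> nat),
    (forall n : nat, (k n < k (S n))%nat) /\
    (forall p : nat, (1 <= p)%nat -> (0 < N p)%nat) /\
    (forall p : nat, (1 <= p)%nat -> (N p < N (S p))%nat) /\
    (forall p : nat, (1 <= p)%nat ->
       exists l : R,
         infinite_sum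
           (fun n => abs1e (INR (cf_q theta (k n)) * INR (N p) * theta)
                     * INR p ^ (cf_q theta (k n))) l /\
         abs1e (INR (N p) * theta) + l <= eps p).
Proof.
  destruct (increasing_thresholds
              (fun p k => (1 <= p)%nat -> cf_gap_large theta (eps p / 2) (INR p) k))
    as [m [Hm_incr Hm_gap]].
  { intro p. destruct (le_lt_dec 1 p) as [Hp | Hp]; [|exists 0%nat; intros; lia].
    pose proof (Hpos p Hp). pose proof PI_RGT_0. pose proof (le_INR _ _ Hp).
    destruct (cf_q_eventually_ge theta Hirr Hgrowth (4 * PI / (eps p / 2)) (4 * INR p))
      as [M HM]; [apply Rdiv_lt_0_compat; lra|simpl in *; lra|].
    exists M. intros k Hk _. apply HM, Hk. }
  assert (Hm_ge : forall p, (p <= m p)%nat)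
    by (induction p; [lia|specialize (Hm_incr p); lia]).
  exists (fun n => n), (fun p => cf_q theta (m p)).
  split; [lia|]. split; [|split].
  - intros p _. apply cf_q_pos, Hirr.
  - intros p Hp. pose proof (cf_q_lt_S theta Hirr (m p) ltac:(specialize (Hm_ge p); lia)).
    pose proof (cf_q_le theta Hirr (S (m p)) (m (S p)) (Hm_incr p)). lia.
  - intros p Hp.
    assert (Hc : 0 < eps p / 2) by (pose proof (Hpos p Hp); lra).
    assert (Hp1 : 1 <= INR p) by (apply le_INR in Hp; exact Hp).
    assert (Hgap : forall k, (m p <= k)%nat -> cf_gap_large theta (eps p / 2) (INR p) k)
      by (intros k Hk; exact (Hm_gap p k Hk Hp)).
    destruct (infinite_sum_le_geometric
                (fun n => abs1e (INR (cf_q theta n) * INR (cf_q theta (m p)) * theta)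
                          * INR p ^ cf_q theta n) (eps p / 2)) as [l [Hl Hle]].
    { intro n. split.
      - apply Rmult_le_pos; [apply abs1e_ge0|apply pow_le; lra].
      - apply (cf_series_term_le theta Hirr _ _ (m p)); [exact Hc|exact Hp1|exact Hgap]. }
    exists l. split; [exact Hl|].
    pose proof (abs1e_cf_q_le theta Hirr _ _ _ Hc Hp1 Hgap). lra.
Qed.
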